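(* Let $R$ be a commutative ring, $M$ an $R$-module and $c$ a closure operation of finite type on $\mathrm{SMod}(M|R)$. Then $\mathrm{SMod}^c(M|R):=\{N\in\mathrm{SMod}(M|R)\mid N=N^c\}$, with the topology induced by the hull-kernel topology, is a spectral space; moreover, $\mathrm{SMod}^c(M|R)$ is closed in $\mathrm{SMod}(M|R)$ endowed with the constructible topology.
   Context: $\mathrm{SMod}(M|R)$ is the set of $R$-submodules of $M$; its hull-kernel topology has as subbasis of closed sets the sets $\boldsymbol V(x_1,\dots,x_m):=\{N\mid x_1,\dots,x_m\in N\}$ for finite $\{x_1,\dots,x_m\}\subseteq M$; with it, $\mathrm{SMod}(M|R)$ is spectral. A closure operation on $\mathrm{SMod}(M|R)$ is a map $N\mapsto N^c$ that is extensive ($N\subseteq N^c$), order-preserving and idempotent; it is of finite type if $N^c=\bigcup\{L^c\mid L\subseteq N,\ L \text{ finitely generated submodule}\}$ for all $N$. The constructible topology on a spectral space $X$ is the coarsest topology for which all quasi-compact open subsets of $X$ are clopen. *)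

From Stdlib Require List.
From HB Require Import structures.
From mathcomp Require Import all_boot all_order all_algebra.
Set Implicit Arguments. Unset Strict Implicit. Unset Printing Implicit Defensive.
Import GRing.Theory.
Local Open Scope ring_scope.

Definition topology (X : Type) := (X -> Prop) -> Prop.

Definition is_topology (X : Type) (T : topology X) : Prop :=
  [/\ T (fun _ => True),
      (forall C : (X -> Prop) -> Prop, (forall U, C U -> T U) ->
         T (fun x => exists U, C U /\ U x)),
      (forall U V, T U -> T V -> T (fun x => U x /\ V x)) &
      (forall U V, (forall x, U x <-> V x) -> T U -> T V)].

Definition generated (X : Type) (S : (X -> Prop) -> Prop) : topology X :=
  fun U => forall T : topology X, is_topology T -> (forall V, S V -> T V) -> T U.

Definition closed_in (X : Type) (T : topology X) (C : X -> Prop) : Prop :=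
  T (fun x => ~ C x).

Definition quasi_compact (X : Type) (T : topology X) (K : X -> Prop) : Prop :=
  forall C : (X -> Prop) -> Prop, (forall U, C U -> T U) ->
    (forall x, K x -> exists U, C U /\ U x) ->
    exists s : seq (X -> Prop), (forall U, List.In U s -> C U) /\
      (forall x, K x -> exists U, List.In U s /\ U x).

Definition irreducible (X : Type) (T : topology X) (Z : X -> Prop) : Prop :=
  (exists x, Z x) /\
  forall C1 C2, closed_in T C1 -> closed_in T C2 ->
    (forall x, Z x -> C1 x \/ C2 x) ->
    (forall x, Z x -> C1 x) \/ (forall x, Z x -> C2 x).

Definition pt_closure (X : Type) (T : topology X) (x : X) : X -> Prop :=
  fun y => forall C, closed_in T C -> C x -> C y.

(* spectral space (Hochster / Stacks Project, Tag 08YG): quasi-compact, sober,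
   quasi-compact opens closed under finite intersections and forming a basis *)
Definition spectral (X : Type) (T : topology X) : Prop :=
  [/\ is_topology T,
      quasi_compact T (fun _ => True),
      (forall Z, closed_in T Z -> irreducible T Z ->
         exists! x : X, forall y, Z y <-> pt_closure T x y),
      (forall U V, T U -> quasi_compact T U -> T V -> quasi_compact T V ->
         quasi_compact T (fun x => U x /\ V x)) &
      (forall U x, T U -> U x ->
         exists W, [/\ T W, quasi_compact T W, W x & forall y, W y -> U y])].

(* constructible topology: coarsest topology in which every quasi-compact
   open set of T is clopen *)
Definition constructible (X : Type) (T : topology X) : topology X :=
  generated (fun U => (T U /\ quasi_compact T U) \/
    exists V, [/\ T V, quasi_compact T V & forall x, U x <-> ~ V x]).

Definition subspace (X : Type) (T : topology X) (P : X -> Prop)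
  : topology {x : X | P x} :=
  fun U => exists V, T V /\ forall y : {x : X | P x}, U y <-> V (proj1_sig y).

Record submod (R : pzRingType) (M : lmodType R) := Submod {
  smem :> M -> Prop;
  smem0 : smem 0;
  smemD : forall x y, smem x -> smem y -> smem (x + y);
  smemZ : forall (a : R) x, smem x -> smem (a *: x) }.

Definition subm (R : pzRingType) (M : lmodType R) (N L : submod M) : Prop :=
  forall x, N x -> L x.

Definition span_of (R : pzRingType) (M : lmodType R) (s : seq M) (x : M) : Prop :=
  exists f : nat -> R, x = \sum_(i < size s) f i *: s`_i.

Definition fin_gen (R : pzRingType) (M : lmodType R) (L : submod M) : Prop :=
  exists s : seq M, forall x, L x <-> span_of s x.

Definition closure_operation (R : pzRingType) (M : lmodType R)
  (c : submod M -> submod M) : Prop :=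
  [/\ (forall N, subm N (c N)),
      (forall N L, subm N L -> subm (c N) (c L)) &
      (forall N, c (c N) = c N)].

Definition finite_type (R : pzRingType) (M : lmodType R)
  (c : submod M -> submod M) : Prop :=
  forall N x, c N x <-> exists L : submod M, [/\ fin_gen L, subm L N & c L x].

Definition V_of (R : pzRingType) (M : lmodType R) (s : seq M) : submod M -> Prop :=
  fun N => forall x, List.In x s -> N x.

Definition hull_kernel (R : pzRingType) (M : lmodType R) : topology (submod M) :=
  generated (fun U => exists s : seq M, forall N, U N <-> ~ V_of s N).

Definition closed_smod (R : pzRingType) (M : lmodType R)
  (c : submod M -> submod M) : submod M -> Prop :=
  fun N => N = c N.

Arguments hull_kernel {R} M.
Arguments subspace {X} T P.

(* The sets D(t) of c-closed submodules containing no element of a finite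
   list t form a basis of SMod^c, stable under intersection, and each D(t) is
   quasi-compact: if a cover of D(t) by basic opens D(u), u in U, had no finite
   subcover, Zorn's lemma would give a maximal set A such that every finite part
   of A and finitely many u lie in, resp. meet, some closed submodule avoiding t.
   Maximality makes A a submodule meeting every u in U, and since c has finite
   type, A^c still avoids t, so A^c is not covered.  Sobriety holds because the
   generic point of an irreducible closed set is the closure of the intersection
   of its points.  Finally, if N <> N^c, some x in N^c \ N lies in L^c for a
   finitely generated L = <s> inside N, and the constructible neighbourhood
   V(s) /\ D(x) of N contains no c-closed submodule. *)

From HB Require Import structures.
From mathcomp Require Import all_boot all_order all_algebra.
From mathcomp Require boolp classical_sets.
From Stdlib Require Import Classical.

Set Implicit Arguments. Unset Strict Implicit. Unset Printing Implicit Defensive.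
Import GRing.Theory.

Lemma list_choice (A B : Type) (P : A -> B -> Prop) (l : seq A) :
  (forall a, List.In a l -> exists b, P a b) ->
  exists l' : seq B, (forall b, List.In b l' -> exists a, List.In a l /\ P a b) /\
    (forall a, List.In a l -> exists b, List.In b l' /\ P a b).
Proof.
elim: l => [|a l IH] H; first by exists [::]; split => // b [].
have [b Pab] := H a (or_introl erefl).
have [l' [l'l ll']] := IH (fun a' a'l => H a' (or_intror a'l)).
exists (b :: l'); split.
  move=> b' [<-|b'l']; first by exists a; split => //; left.
  by have [a' [a'l Pa'b']] := l'l b' b'l'; exists a'; split => //; right.
move=> a' [<-|a'l]; first by exists b; split => //; left.
by have [b' [b'l' Pa'b']] := ll' a' a'l; exists b'; split => //; right.
Qed.

Lemma list_split (T : Type) (P Q : T -> Prop) (s : seq T) :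
  (forall z, List.In z s -> P z \/ Q z) ->
  exists s', (forall z, List.In z s' -> P z) /\
    forall z, List.In z s -> List.In z s' \/ Q z.
Proof.
elim: s => [|a s IH] H; first by exists [::]; split => // z [].
have [s' [s'P ss']] := IH (fun z zs => H z (or_intror zs)).
case: (H a (or_introl erefl)) => [Pa|Qa].
  exists (a :: s'); split; first by move=> z [<-|/s'P].
  by move=> z [<-|/ss' [zs'|Qz]]; [left; left|left; right|right].
by exists s'; split => // z [<-|/ss'] //; right.
Qed.

Lemma InP (T : eqType) (x : T) (s : seq T) : reflect (List.In x s) (x \in s).
Proof.
elim: s => [|y s IH] /=; first by right.
by rewrite in_cons; apply: (iffP orP) => [[/eqP ->|/IH]|[->|/IH]]; auto.
Qed.

Lemma chain_finite_subset (T : Type) (F : (T -> Prop) -> Prop) (s : seq T) :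
  classical_sets.total_on F classical_sets.subset ->
  (forall z, List.In z s -> exists2 G, F G & G z) ->
  (forall z, ~ List.In z s) \/ exists G, F G /\ forall z, List.In z s -> G z.
Proof.
move=> Ftot; elim: s => [|a s IH] Hs; first by left => z [].
have [Ga FGa Gaa] := Hs a (or_introl erefl).
case: (IH (fun z zs => Hs z (or_intror zs))) => [s0|[G [FG sG]]].
  by right; exists Ga; split => // z [<-|/s0].
right; case: (Ftot _ _ FGa FG) => [GaG|GGa].
  by exists G; split => // z [<-|/sG //]; exact: GaG.
by exists Ga; split => // z [<-|/sG /GGa].
Qed.

Section Topology.
Variables (X : Type) (T : topology X).

Lemma generated_topology (S : (X -> Prop) -> Prop) : is_topology (generated S).
Proof.
split.
- by move=> T' [] ? _ _ _ _.
- move=> C CS T' T'top ST'; case: (T'top) => _ T'U _ _.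
  by apply: T'U => U CU; exact: CS U CU T' T'top ST'.
- move=> U V US VS T' T'top ST'; case: (T'top) => _ _ T'I _.
  by apply: T'I; [exact: US|exact: VS].
- move=> U V UV US T' T'top ST'; case: (T'top) => _ _ _ T'ext.
  by apply: (T'ext U) => //; exact: US.
Qed.

Lemma generated_sub (S : (X -> Prop) -> Prop) U : S U -> generated S U.
Proof. by move=> SU T' _; apply. Qed.

Lemma quasi_compact_ext K K' :
  (forall x, K x <-> K' x) -> quasi_compact T K -> quasi_compact T K'.
Proof.
move=> KK' Kqc C CT K'cov.
have [s [sC scov]] := Kqc C CT (fun x Kx => K'cov x ((KK' x).1 Kx)).
by exists s; split => // x /KK' /scov.
Qed.

Lemma quasi_compact_list_union (I : Type) (F : I -> X -> Prop) (l : seq I) :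
  (forall i, List.In i l -> quasi_compact T (F i)) ->
  quasi_compact T (fun x => exists i, List.In i l /\ F i x).
Proof.
elim: l => [|a l IH] Fqc C CT cov.
  by exists [::]; split => // x [i [[] _]].
have cov_a x : F a x -> exists U, C U /\ U x.
  by move=> Fax; apply: cov; exists a; split => //; left.
have cov_l x : (exists i, List.In i l /\ F i x) -> exists U, C U /\ U x.
  by move=> [i [il Fix]]; apply: cov; exists i; split => //; right.
have [s1 [s1C s1cov]] := Fqc a (or_introl erefl) C CT cov_a.
have [s2 [s2C s2cov]] := IH (fun i il => Fqc i (or_intror il)) C CT cov_l.
exists (s1 ++ s2); split; first by move=> U /List.in_app_iff [/s1C|/s2C].
move=> x [i [[<-|il] Fix]].
  by have [U [Us1 Ux]] := s1cov x Fix; exists U; rewrite List.in_app_iff; auto.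
have [U [Us2 Ux]] := s2cov x (ex_intro _ i (conj il Fix)).
by exists U; rewrite List.in_app_iff; auto.
Qed.

Lemma subspace_topology (P : X -> Prop) : is_topology T -> is_topology (subspace T P).
Proof.
case=> Tall TU TI Text; split.
- by exists (fun _ => True).
- move=> C CP.
  exists (fun x => exists V, (exists U, C U /\ T V /\
                                forall y, U y <-> V (proj1_sig y)) /\ V x).
  split; first by apply: TU => V [U [_ []]].
  move=> y; split.
    move=> [U [CU Uy]]; have [V [TV UV]] := CP U CU.
    by exists V; split; [exists U|exact/UV].
  by move=> [V [[U [CU [_ UV]]] Vy]]; exists U; split => //; exact/UV.
- move=> U V [U' [TU' UU']] [V' [TV' VV']].
  by exists (fun x => U' x /\ V' x); split; [exact: TI|move=> y; rewrite UU' VV'].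
- move=> U V UV [U' [TU' UU']].
  by exists U'; split => // y; rewrite -UU'; exact: iff_sym (UV y).
Qed.

Section TopologyAxioms.
Hypothesis T_top : is_topology T.

Lemma closed_list_union (I : Type) (F : I -> X -> Prop) (l : seq I) :
  (forall i, List.In i l -> closed_in T (F i)) ->
  closed_in T (fun x => exists i, List.In i l /\ F i x).
Proof.
case: T_top => Tall _ TI Text.
elim: l => [|a l IH] Fcl.
  by apply: Text Tall => x; split => // _ [i [[] _]].
apply: (Text (fun x => ~ F a x /\ ~ exists i, List.In i l /\ F i x)).
  move=> x; split.
    by move=> [nFa nFl] [i [[<-|il] Fix]]; [|apply: nFl; exists i].
  move=> nF; split => [Fax|[i [il Fix]]]; apply: nF.
    by exists a; split => //; left.
  by exists i; split => //; right.
by apply: TI; [apply: Fcl; left|apply: IH => i il; apply: Fcl; right].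
Qed.

Lemma irreducible_list_cover (I : Type) (F : I -> X -> Prop) (l : seq I) Z :
  irreducible T Z -> (forall i, List.In i l -> closed_in T (F i)) ->
  (forall x, Z x -> exists i, List.In i l /\ F i x) ->
  exists i, List.In i l /\ forall x, Z x -> F i x.
Proof.
case=> [[z Zz] Zirr]; elim: l => [|a l IH] Fcl Zcov.
  by have [i [[] _]] := Zcov z Zz.
have Flcl := closed_list_union (fun i il => Fcl i (or_intror il)).
case: (Zirr _ _ (Fcl a (or_introl erefl)) Flcl).
- by move=> x /Zcov [i [[<-|il] Fix]]; [left|right; exists i].
- by move=> ZFa; exists a; split => //; left.
- move=> /(IH (fun i il => Fcl i (or_intror il))) [i [il ZFi]].
  by exists i; split => //; right.
Qed.

End TopologyAxioms.

Section Basis.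
Variables (I : Type) (B : I -> X -> Prop).
Hypothesis B_basis : forall U x, T U -> U x ->
  exists i, B i x /\ forall y, B i y -> U y.

Lemma quasi_compact_basic_covers K :
  (forall J : I -> Prop, (forall x, K x -> exists i, J i /\ B i x) ->
     exists l, (forall i, List.In i l -> J i) /\
       forall x, K x -> exists i, List.In i l /\ B i x) ->
  quasi_compact T K.
Proof.
move=> Kfin C CT Kcov.
pose J i := exists U, C U /\ forall y, B i y -> U y.
have [l [lJ lcov]] : exists l, (forall i, List.In i l -> J i) /\
    forall x, K x -> exists i, List.In i l /\ B i x.
  apply: Kfin => x /Kcov [U [CU Ux]].
  have [i [Bix BU]] := B_basis (CT U CU) Ux.
  by exists i; split => //; exists U.
have [s [sJ lU]] := list_choice lJ.
exists s; split; first by move=> U /sJ [i [_ []]].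
move=> x /lcov [i [il Bix]]; have [U [Us [_ BU]]] := lU i il.
by exists U; split => //; exact: BU.
Qed.

Hypothesis B_open : forall i, T (B i).

Lemma quasi_compact_open_basic_union U :
  T U -> quasi_compact T U ->
  exists l : seq I, forall x, U x <-> exists i, List.In i l /\ B i x.
Proof.
move=> TU Uqc.
pose C K := exists i, K = B i /\ forall y, B i y -> U y.
have [s [sC scov]] : exists s, (forall K, List.In K s -> C K) /\
    forall x, U x -> exists K, List.In K s /\ K x.
  apply: Uqc => [K [i [-> _]]|x Ux]; first exact: B_open.
  have [i [Bix BU]] := B_basis TU Ux.
  by exists (B i); split => //; exists i.
have [l [ls sl]] := list_choice sC.
exists l => x; split.
  by move=> /scov [K [Ks Kx]]; have [i [il [EK _]]] := sl K Ks; exists i; rewrite -EK.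
by move=> [i [/ls [K [_ [_ BU]]] Bix]]; exact: BU.
Qed.

Variable meet : I -> I -> I.
Hypothesis B_meet : forall i j x, B (meet i j) x <-> B i x /\ B j x.
Hypothesis B_quasi_compact : forall i, quasi_compact T (B i).

Lemma quasi_compact_openI U V :
  T U -> quasi_compact T U -> T V -> quasi_compact T V ->
  quasi_compact T (fun x => U x /\ V x).
Proof.
move=> TU Uqc TV Vqc.
have [lU EU] := quasi_compact_open_basic_union TU Uqc.
have [lV EV] := quasi_compact_open_basic_union TV Vqc.
pose lUV := List.flat_map (fun i => List.map (meet i) lV) lU.
apply: (quasi_compact_ext (K := fun x => exists k, List.In k lUV /\ B k x)); last first.
  by apply: quasi_compact_list_union => k _; exact: B_quasi_compact.
move=> x; rewrite EU EV; split.
  move=> [k [/List.in_flat_map [i [il /List.in_map_iff [j [<- jl]]]] /B_meet []]].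
  by split; [exists i|exists j].
move=> [[i [il Bix]] [j [jl Bjx]]]; exists (meet i j); split; last exact/B_meet.
by apply/List.in_flat_map; exists i; split => //; apply/List.in_map_iff; exists j.
Qed.

Lemma subspace_basis (P : X -> Prop) U (y : {x | P x}) :
  subspace T P U -> U y ->
  exists i, B i (proj1_sig y) /\ forall y', B i (proj1_sig y') -> U y'.
Proof.
move=> [V [TV UV]] /UV Vy; have [i [Biy BV]] := B_basis TV Vy.
by exists i; split => // y' /BV /UV.
Qed.

End Basis.
End Topology.

Section Submodules.
Variables (R : pzRingType) (M : lmodType R).

Lemma submod_ext (N L : submod M) : (forall x, N x <-> L x) -> N = L.
Proof.
case: N L => n n0 nD nZ [l l0 lD lZ] /= NL.
have nl : n = l by apply: boolp.funext => x; apply: boolp.propext.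
by subst l; congr Submod; apply: boolp.Prop_irrelevance.
Qed.

Definition bigcap_submod (I : Type) (P : I -> Prop) (F : I -> submod M) : submod M.
Proof.
refine (@Submod R M (fun x => forall i, P i -> F i x) _ _ _).
- by move=> i _; exact: smem0.
- by move=> x y Fx Fy i Pi; apply: smemD; [exact: Fx|exact: Fy].
- by move=> a x Fx i Pi; apply: smemZ; exact: Fx.
Defined.

Lemma span_of_sub (s : seq M) (N : submod M) x :
  (forall z, List.In z s -> N z) -> span_of s x -> N x.
Proof.
move=> sN [f ->]; apply: (big_ind N); [exact: smem0|exact: smemD|].
by move=> i _; apply/smemZ/sN/InP; exact: mem_nth.
Qed.

Lemma span_of_mem (s : seq M) z : List.In z s -> span_of s z.
Proof.
move=> /InP zs; have zi : index z s < size s by rewrite index_mem.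
exists (fun i => if i == index z s then 1 else 0)%R.
rewrite (bigD1 (Ordinal zi)) //= eqxx scale1r nth_index // big1 ?addr0 //.
move=> i /eqP ni; case: eqP => [iz|]; last by rewrite scale0r.
by case: ni; apply: val_inj.
Qed.

Definition span_submod (s : seq M) : submod M.
Proof.
refine (@Submod R M (span_of s) _ _ _).
- by exists (fun _ => 0%R); rewrite big1 // => i _; rewrite scale0r.
- move=> x y [f ->] [g ->]; exists (fun i => f i + g i)%R.
  by rewrite -big_split; apply: eq_bigr => i _; rewrite scalerDl.
- move=> a x [f ->]; exists (fun i => a * f i)%R.
  by rewrite scaler_sumr; apply: eq_bigr => i _; rewrite scalerA.
Defined.

Lemma id_closure_operation : closure_operation (fun N : submod M => N).
Proof. by split => // N L. Qed.

Lemma id_finite_type : finite_type (fun N : submod M => N).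
Proof.
move=> N x; split=> [Nx|[L [_ LN /LN //]]].
exists (span_submod [:: x]); split; first by exists [:: x].
  by move=> y; apply: span_of_sub => z [<-|[]].
by apply: span_of_mem; left.
Qed.

Definition avoid (t : seq M) (N : submod M) : Prop :=
  forall x, List.In x t -> ~ N x.

Definition meets (u : seq M) (G : M -> Prop) : Prop :=
  exists2 x, List.In x u & G x.

Lemma avoid_cat (t1 t2 : seq M) N : avoid (t1 ++ t2) N <-> avoid t1 N /\ avoid t2 N.
Proof.
split; first by move=> t12N; split => x xt; apply: t12N; rewrite List.in_app_iff; auto.
by move=> [t1N t2N] x /List.in_app_iff [/t1N|/t2N].
Qed.

Lemma hull_kernel_topology : is_topology (hull_kernel M).
Proof. exact: generated_topology. Qed.

Lemma open_not_V (s : seq M) : hull_kernel M (fun N => ~ V_of s N).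
Proof. by apply: generated_sub; exists s. Qed.

Lemma open_not_mem (x : M) : hull_kernel M (fun N => ~ N x).
Proof.
apply: generated_sub; exists [:: x] => N; split.
  by move=> Nx xN; apply/Nx/xN; left.
by move=> nV Nx; apply: nV => y [<-|[]].
Qed.

Lemma avoid_open (t : seq M) : hull_kernel M (avoid t).
Proof.
case: hull_kernel_topology => Tall _ TI Text.
elim: t => [|x t IH]; first by apply: Text Tall => N; split => // _ y [].
apply: (Text (fun N => ~ N x /\ avoid t N)); last exact: TI (open_not_mem x) IH.
move=> N; split => [[Nx tN] y [<-|/tN]|xtN] //.
by split => [|y yt]; apply: xtN; [left|right].
Qed.

Lemma hull_kernel_basis U N :
  hull_kernel M U -> U N -> exists t, avoid t N /\ forall N', avoid t N' -> U N'.
Proof.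
move=> HU; move: N; apply: (HU (fun U => forall N, U N ->
  exists t, avoid t N /\ forall N', avoid t N' -> U N')).
- split.
  + by move=> N _; exists [::]; split => // N' _.
  + move=> C Cb N [U' [CU' U'N]]; have [t [tN tU']] := Cb U' CU' N U'N.
    by exists t; split => // N' /tU' U'N'; exists U'.
  + move=> U1 U2 U1b U2b N [/U1b [t1 [t1N t1U]] /U2b [t2 [t2N t2U]]].
    exists (t1 ++ t2); split; first exact/avoid_cat.
    by move=> N' /avoid_cat [/t1U ? /t2U ?].
  + move=> U1 U2 U12 U1b N /U12 /U1b [t [tN tU]].
    by exists t; split => // N' /tU /U12.
- move=> V [s sV] N /sV nV.
  have [x xs nNx] : exists2 x, List.In x s & ~ N x.
    by apply: NNPP => H; apply: nV => x xs; apply: NNPP => nNx; apply: H; exists x.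
  exists [:: x]; split; first by move=> y [<-|[]].
  by move=> N' xN'; apply/sV => VN'; apply: (xN' x); [left|exact: VN'].
Qed.

End Submodules.

Section FiniteMeets.
Variables (R : pzRingType) (M : lmodType R) (c : submod M -> submod M).
Hypotheses (c_closure : closure_operation c) (c_finite : finite_type c).
Variables (t : seq M) (U : seq M -> Prop).

Definition realizes (L : seq (seq M)) (S : seq M) (N : submod M) : Prop :=
  [/\ N = c N, avoid t N, forall z, List.In z S -> N z &
      forall u, List.In u L -> meets u N].

Definition consistent (G : M -> Prop) : Prop :=
  forall L S, (forall u, List.In u L -> U u) -> (forall z, List.In z S -> G z) ->
    exists N, realizes L S N.

Hypothesis finite_meets : forall L, (forall u, List.In u L -> U u) ->
  exists N : submod M, [/\ N = c N, avoid t N & forall u, List.In u L -> meets u N].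

Lemma consistent_bigcup (F : (M -> Prop) -> Prop) :
  (forall G, F G -> consistent G) ->
  classical_sets.total_on F classical_sets.subset ->
  consistent (classical_sets.bigcup F id).
Proof.
move=> Fcons Ftot L S LU SF.
case: (chain_finite_subset Ftot SF) => [S0|[G [FG SG]]]; last exact: Fcons G FG L S LU SG.
by have [N [Nc Nt NL]] := finite_meets LU; exists N; split => // z /S0.
Qed.

Section Maximal.
Variable A : M -> Prop.
Hypothesis A_consistent : consistent A.
Hypothesis A_maximal : forall w, consistent (fun z => A z \/ z = w) -> A w.

Lemma maximal_mem_of_forced w (S0 : seq M) :
  (forall z, List.In z S0 -> A z) ->
  (forall N : submod M, (forall z, List.In z S0 -> N z) -> N w) -> A w.
Proof.
move=> S0A S0w; apply: A_maximal => L S LU SAw.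
have [S' [S'A SS']] := list_split SAw.
have [N [Nc Nt NS NL]] : exists N, realizes L (S' ++ S0) N.
  by apply: A_consistent => // z /List.in_app_iff [/S'A|/S0A].
exists N; split => // z /SS' [zS'|->]; first by apply: NS; rewrite List.in_app_iff; left.
by apply: S0w => z0 z0S0; apply: NS; rewrite List.in_app_iff; right.
Qed.

Lemma maximal0 : A 0%R.
Proof. by apply: (@maximal_mem_of_forced _ [::]) => // N _; exact: smem0. Qed.

Lemma maximalD x y : A x -> A y -> A (x + y)%R.
Proof.
move=> Ax Ay; apply: (@maximal_mem_of_forced _ [:: x; y]); first by move=> z [<-|[<-|[]]].
by move=> N xyN; apply: smemD; apply: xyN; [left|right; left].
Qed.

Lemma maximalZ a x : A x -> A (a *: x)%R.
Proof.
move=> Ax; apply: (@maximal_mem_of_forced _ [:: x]); first by move=> z [<-|[]].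
by move=> N xN; apply: smemZ; apply: xN; left.
Qed.

Definition maximal_submod : submod M := Submod maximal0 maximalD maximalZ.

(* If [A] missed [u], each [x] in [u] would be excluded by a finite inconsistent
   configuration; merging them with [u] contradicts the consistency of [A]. *)
Lemma maximal_meets u : U u -> meets u A.
Proof.
move=> Uu; apply: NNPP => uA.
have bad x : List.In x u -> exists p : seq (seq M) * seq M,
    [/\ forall u', List.In u' p.1 -> U u', forall z, List.In z p.2 -> A z \/ z = x
      & forall N, ~ realizes p.1 p.2 N].
  move=> xu; apply: NNPP => nbad; apply: uA; exists x => //.
  apply: A_maximal => L S LU SAx; apply: NNPP => nN.
  by apply: nbad; exists (L, S); split => // N NLS; apply: nN; exists N.
have [l [l_bad u_l]] := list_choice bad.
have lAu z : List.In z (List.flat_map snd l) -> A z \/ List.In z u.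
  move=> /List.in_flat_map [p [pl zp]]; have [x [xu [_ pA _]]] := l_bad p pl.
  by case: (pA z zp) => [|->]; [left|right].
have [S [SA HS]] := list_split lAu.
have [N [Nc Nt NS NL]] : exists N, realizes (u :: List.flat_map fst l) S N.
  apply: A_consistent => // u' [<-|/List.in_flat_map [p [pl u'p]]] //.
  by have [x [_ [pU _ _]]] := l_bad p pl; exact: pU.
have [x0 x0u Nx0] := NL u (or_introl erefl).
have [p [pl [_ pA nN]]] := u_l x0 x0u.
apply: (nN N); split => //.
  move=> z zp; case: (pA z zp) => [Az|->] //.
  have [|zS|zu] := HS z; [by apply/List.in_flat_map; exists p|exact: NS|].
  by case: uA; exists z.
by move=> u' u'p; apply: NL; right; apply/List.in_flat_map; exists p.
Qed.

Lemma maximal_closure_avoid : avoid t (c maximal_submod).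
Proof.
have [_ cmono _] := c_closure.
move=> x xt cAx; have [L [[s Ls] LA Lx]] := (c_finite maximal_submod x).1 cAx.
have sA z : List.In z s -> A z by move=> zs; apply: LA; apply/Ls/span_of_mem.
have [N [Nc Nt NS _]] : exists N, realizes [::] s N by exact: A_consistent.
apply: (Nt x xt); rewrite Nc; apply: (cmono L N) => // y /Ls; exact: span_of_sub.
Qed.

End Maximal.

Lemma closed_meets_all :
  exists N : submod M, [/\ N = c N, avoid t N & forall u, U u -> meets u N].
Proof.
have [cext _ cidem] := c_closure.
have [A [Acons Amax]] := classical_sets.Zorn_bigcup consistent_bigcup.
have A_maximal w : consistent (fun z => A z \/ z = w) -> A w.
  move=> Aw_cons; apply: NNPP => nAw; apply: (Amax _ _ Aw_cons).
  by split => [z Az|wA]; [left|apply/nAw/wA; right].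
exists (c (maximal_submod Acons A_maximal)); split; first by rewrite cidem.
  exact: maximal_closure_avoid.
by move=> u /(maximal_meets Acons A_maximal) [x xu Ax]; exists x => //; apply: cext.
Qed.

End FiniteMeets.

Lemma avoid_finite_subcover (R : pzRingType) (M : lmodType R)
    (c : submod M -> submod M) (t : seq M) (U : seq M -> Prop) :
  closure_operation c -> finite_type c ->
  (forall N, N = c N -> avoid t N -> exists u, U u /\ avoid u N) ->
  exists L, (forall u, List.In u L -> U u) /\
    forall N, N = c N -> avoid t N -> exists u, List.In u L /\ avoid u N.
Proof.
move=> c_closure c_finite cover; apply: NNPP => nfin.
have finite_meets L : (forall u, List.In u L -> U u) -> exists N : submod M,
    [/\ N = c N, avoid t N & forall u, List.In u L -> meets u N].
  move=> LU; apply: NNPP => nN; apply: nfin; exists L; split => // N Nc Nt.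
  apply: NNPP => nL; apply: nN; exists N; split => // u uL.
  apply: NNPP => nuN; apply: nL; exists u; split => // x xu Nx.
  by apply: nuN; exists x.
have [N [Nc Nt NU]] := closed_meets_all c_closure c_finite finite_meets.
have [u [Uu uN]] := cover N Nc Nt; have [x xu Nx] := NU u Uu.
exact: uN x xu Nx.
Qed.

Section HullKernel.
Variables (R : pzRingType) (M : lmodType R).

Lemma avoid_quasi_compact (t : seq M) : quasi_compact (hull_kernel M) (avoid t).
Proof.
apply: (quasi_compact_basic_covers (@hull_kernel_basis _ M)) => J cov.
have [L [LJ Lcov]] := avoid_finite_subcover (t := t) (U := J)
  (@id_closure_operation _ M) (@id_finite_type _ M) (fun N _ => cov N).
by exists L; split => // N; apply: Lcov.
Qed.

Lemma not_mem_quasi_compact (x : M) : quasi_compact (hull_kernel M) (fun N => ~ N x).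
Proof.
refine (quasi_compact_ext _ (avoid_quasi_compact (t := [:: x]))) => N.
by split => [/(_ x (or_introl erefl))|Nx y [<-|[]]].
Qed.

Lemma not_V_quasi_compact (s : seq M) :
  quasi_compact (hull_kernel M) (fun N => ~ V_of s N).
Proof.
refine (quasi_compact_ext _ (quasi_compact_list_union (l := s)
  (fun x _ => not_mem_quasi_compact (x := x)))) => N.
split=> [[x [xs Nx]] sN|nsN]; first exact: Nx (sN x xs).
by apply: NNPP => nx; apply: nsN => x xs; apply: NNPP => Nx; apply: nx; exists x.
Qed.

Lemma V_not_mem_constructible (s : seq M) (x : M) :
  constructible (hull_kernel M) (fun N => V_of s N /\ ~ N x).
Proof.
move=> T' [_ _ T'I _] ST'; apply: T'I; apply: ST'.
- right; exists (fun N => ~ V_of s N); split; [exact: open_not_V|exact: not_V_quasi_compact|].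
  by move=> N; split => [sN /(_ sN)|/NNPP].
- by left; split; [exact: open_not_mem|exact: not_mem_quasi_compact].
Qed.

End HullKernel.

Section ClosedSubmodules.
Variables (R : pzRingType) (M : lmodType R) (c : submod M -> submod M).
Hypotheses (c_closure : closure_operation c) (c_finite : finite_type c).

Local Notation SModc := (subspace (hull_kernel M) (closed_smod c)).

Lemma closed_smod_basis U y : SModc U -> U y ->
  exists t, avoid t (proj1_sig y) /\ forall y', avoid t (proj1_sig y') -> U y'.
Proof. by apply: subspace_basis; exact: hull_kernel_basis. Qed.

Lemma closed_smod_avoid_open (t : seq M) : SModc (fun y => avoid t (proj1_sig y)).
Proof. by exists (avoid t); split => //; exact: avoid_open. Qed.

Lemma closed_smod_avoid_quasi_compact (t : seq M) :
  quasi_compact SModc (fun y => avoid t (proj1_sig y)).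
Proof.
apply: (quasi_compact_basic_covers closed_smod_basis) => J cov.
have [L [LJ Lcov]] := avoid_finite_subcover (t := t) (U := J) c_closure c_finite
  (fun N Nc Nt => cov (exist _ N Nc) Nt).
by exists L; split => // y; apply: Lcov; exact: proj2_sig y.
Qed.

Lemma closed_smod_mem_closed (x : M) : closed_in SModc (fun y => proj1_sig y x).
Proof. by exists (fun N => ~ N x); split => //; exact: open_not_mem. Qed.

Lemma closed_smod_closed_up C a b : closed_in SModc C -> C a ->
  subm (proj1_sig a) (proj1_sig b) -> C b.
Proof.
move=> Ccl Ca ab; apply: NNPP => nCb.
have [t [tb tC]] := closed_smod_basis Ccl nCb.
by apply: (tC a) => // x xt ax; apply: (tb x xt); exact: ab.
Qed.

Lemma pt_closure_subm a b : pt_closure SModc a b -> subm (proj1_sig a) (proj1_sig b).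
Proof. by move=> ab x ax; exact: ab _ (closed_smod_mem_closed x) ax. Qed.

Lemma closure_closed_smod N : closed_smod c (c N).
Proof. by case: c_closure => _ _ cidem; rewrite /closed_smod cidem. Qed.

Lemma closed_smod_sober Z : closed_in SModc Z -> irreducible SModc Z ->
  exists! g, forall y, Z y <-> pt_closure SModc g y.
Proof.
move=> Zcl Zirr; have [cext cmono _] := c_closure.
pose I := bigcap_submod Z (@proj1_sig _ _).
pose g := exist (closed_smod c) (c I) (closure_closed_smod I).
have Zg : Z g.
  apply: NNPP => nZg; have [t [tg tZ]] := closed_smod_basis Zcl nZg.
  have [|x [xt Zx]] := irreducible_list_cover (l := t)
    (subspace_topology _ (hull_kernel_topology M)) Zirr (fun x _ => closed_smod_mem_closed x).
    move=> y Zy; apply: NNPP => nty; apply: (tZ y) => // x xt yx.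
    by apply: nty; exists x.
  by apply: (tg x xt); apply: cext => y; exact: Zx.
have Zpt y : Z y <-> pt_closure SModc g y.
  split=> [Zy C Ccl Cg|gy]; last exact: gy _ Zcl Zg.
  apply: (closed_smod_closed_up Ccl Cg); rewrite /= (proj2_sig y).
  by apply: cmono => x Ix; exact: Ix y Zy.
exists g; split => // g' Zpt'.
have Zg' : Z g' by apply/Zpt' => C _.
apply: eq_sig_hprop => [N p q|]; first exact: boolp.Prop_irrelevance.
have gg' := pt_closure_subm ((Zpt g').1 Zg').
have g'g := pt_closure_subm ((Zpt' g).1 Zg).
by apply: submod_ext => x; split; [exact: gg'|exact: g'g].
Qed.

Lemma closed_smod_spectral : spectral SModc.
Proof.
split.
- exact: subspace_topology _ (hull_kernel_topology M).
- refine (quasi_compact_ext _ (closed_smod_avoid_quasi_compact (t := [::]))) => y.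
  by split => // _ x [].
- exact: closed_smod_sober.
- apply: (quasi_compact_openI closed_smod_basis closed_smod_avoid_open (meet := cat)) => //.
    by move=> t1 t2 y; exact: avoid_cat.
  exact: closed_smod_avoid_quasi_compact.
- move=> U y TU Uy; have [t [ty tU]] := closed_smod_basis TU Uy.
  exists (fun y => avoid t (proj1_sig y)); split => //.
    exact: closed_smod_avoid_open.
  exact: closed_smod_avoid_quasi_compact.
Qed.

Lemma not_closed_smod_nbhd N : ~ closed_smod c N ->
  exists s x, [/\ V_of s N, ~ N x &
    forall N', V_of s N' -> ~ N' x -> ~ closed_smod c N'].
Proof.
move=> nNc; have [cext cmono _] := c_closure.
have [x cNx nNx] : exists2 x, c N x & ~ N x.
  apply: NNPP => H; apply/nNc/submod_ext => x; split; first exact: cext.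
  by move=> cNx; apply: NNPP => nNx; apply: H; exists x.
have [L [[s Ls] LN Lx]] := (c_finite N x).1 cNx.
exists s, x; split => // [z zs|N' sN' nN'x N'c]; first exact/LN/Ls/span_of_mem.
apply: nN'x; rewrite N'c; apply: (cmono L) Lx => y /Ls; exact: span_of_sub.
Qed.

Lemma closed_smod_constructible_closed :
  closed_in (constructible (hull_kernel M)) (closed_smod c).
Proof.
move=> T' T'top ST'; case: (T'top) => _ T'U _ T'ext.
apply: (T'ext (fun N => exists W, (constructible (hull_kernel M) W /\
                         forall N', W N' -> ~ closed_smod c N') /\ W N)).
  move=> N; split=> [[W [[_ Wc] /Wc //]]|/not_closed_smod_nbhd [s [x [sN nNx sxc]]]].
  exists (fun N => V_of s N /\ ~ N x); split => //.
  by split=> [|N' []]; [exact: V_not_mem_constructible|exact: sxc].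
by apply: T'U => W [Wcons _]; exact: Wcons T' T'top ST'.
Qed.

End ClosedSubmodules.

Theorem proposition3p4 (R : comPzRingType) (M : lmodType R)
  (c : submod M -> submod M) :
  closure_operation c -> finite_type c ->
  spectral (subspace (hull_kernel M) (closed_smod c)) /\
  closed_in (constructible (hull_kernel M)) (closed_smod c).
Proof.
move=> c_closure c_finite; split.
- exact: closed_smod_spectral.
- exact: closed_smod_constructible_closed.
Qed.
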